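(* Let $N\ge1$, $\Delta w>0$, $\Delta t>0$. For $i=0,\dots,N-1$ let $D_{i+1/2}>0$ and let $\tilde{\mathcal C}^n_{i+1/2}\in\mathbb{R}$ be arbitrary (in applications they are computed from $f^n$). Define $\lambda^n_{i+1/2}=\Delta w\,\tilde{\mathcal C}^n_{i+1/2}/D_{i+1/2}$, $\delta^n_{i+1/2}=\frac{1}{\lambda^n_{i+1/2}}+\frac{1}{1-e^{\lambda^n_{i+1/2}}}$ (with $\delta^n_{i+1/2}=1/2$ if $\lambda^n_{i+1/2}=0$), $$\mathcal F^n_{i+1/2}=\tilde{\mathcal C}^n_{i+1/2}\big[(1-\delta^n_{i+1/2})f^n_{i+1}+\delta^n_{i+1/2}f^n_i\big]+D_{i+1/2}\frac{f^n_{i+1}-f^n_i}{\Delta w},\quad i=0,\dots,N-1,$$ and $\mathcal F^n_{-1/2}=\mathcal F^n_{N+1/2}=0$. Consider the explicit (forward Euler) scheme $$f_i^{n+1}=f_i^n+\Delta t\,\frac{\mathcal F^n_{i+1/2}-\mathcal F^n_{i-1/2}}{\Delta w},\qquad i=0,\dots,N.$$ Let $M=\max_i|\tilde{\mathcal C}^n_{i+1/2}|$ and $D=\max_i D_{i+1/2}$. If $$\Delta t\le\frac{\Delta w^2}{2(M\Delta w+D)},$$ then $f_i^n\ge0$ for all $i$ implies $f_i^{n+1}\ge 0$ for all $i=0,\dots,N$.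
   Context: This is the Chang–Cooper type (SP-CC) discretization of the 1D Fokker–Planck equation $\partial_t f=\partial_w[(\mathcal B[f]+D')f+D\partial_w f]$ on a uniform grid with no-flux boundary conditions; in the paper $\tilde{\mathcal C}^n_{i+1/2}=\frac{D_{i+1/2}}{\Delta w}\int_{w_i}^{w_{i+1}}\frac{\mathcal B[f^n](w)+D'(w)}{D(w)}dw$ (or a quadrature of it), but the claim holds for arbitrary real values. *)

From Stdlib Require Import Reals Lra Lia List.
Open Scope R_scope.

(* Grid values f_0..f_N : nat -> R ; interface quantities indexed by i
   stand for i+1/2, i = 0..N-1. *)

Definition cc_delta (l : R) : R :=
  if Req_EM_T l 0 then 1/2 else 1/l + 1/(1 - exp l).

Definition cc_lambda (dw : R) (C Dh : nat -> R) (i : nat) : R :=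
  dw * C i / Dh i.

Definition cc_flux (dw : R) (C Dh f : nat -> R) (i : nat) : R :=
  let d := cc_delta (cc_lambda dw C Dh i) in
  C i * ((1 - d) * f (S i) + d * f i) + Dh i * (f (S i) - f i) / dw.

Definition cc_flux_right (N : nat) (dw : R) (C Dh f : nat -> R) (i : nat) : R :=
  if Nat.ltb i N then cc_flux dw C Dh f i else 0.

Definition cc_flux_left (N : nat) (dw : R) (C Dh f : nat -> R) (i : nat) : R :=
  match i with
  | O => 0
  | S j => cc_flux_right N dw C Dh f j
  end.

Definition cc_step (N : nat) (dw dt : R) (C Dh f : nat -> R) (i : nat) : R :=
  f i + dt * (cc_flux_right N dw C Dh f i - cc_flux_left N dw C Dh f i) / dw.

(* max_{i=0..N-1} g i  (seeded with 0; used only for nonnegative g, N >= 1) *)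
Definition max_upto (N : nat) (g : nat -> R) : R :=
  fold_right Rmax 0 (map g (seq 0 N)).

(** The Chang–Cooper flux is a Scharfetter–Gummel flux: with [q = D/Δw] and the
    Bernoulli function [B(λ) = λ/(e^λ - 1)],
    [F_{i+1/2} = q (B(-λ) f_{i+1} - B(λ) f_i)].  Since [B > 0] and
    [B(λ) ≤ 1 + |λ|], both coefficients lie in [[0, M + D/Δw]].  The Euler update
    at node [i] is thus [f_i] times [1 - Δt/Δw] (sum of two such coefficients)
    plus nonnegative multiples of [f_{i±1}], and the CFL condition, i.e.
    [2 Δt/Δw (M + D/Δw) ≤ 1], keeps the first factor nonnegative. *)

From Stdlib Require Import Reals Lra Lia List.
Open Scope R_scope.

(* Junk value [0] at [l = 0]; every lemma below excludes that point. *)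
Definition bern (l : R) : R := l / (exp l - 1).

Lemma exp_sub1_sign (l : R) : l <> 0 -> 0 < l * (exp l - 1).
Proof.
  intro Hl; rewrite <- exp_0.
  destruct (Rlt_or_le 0 l) as [Hpos | Hneg].
  - assert (exp 0 < exp l) by (apply exp_increasing; lra); nra.
  - assert (exp l < exp 0) by (apply exp_increasing; lra); nra.
Qed.

Lemma exp_sub1_neq0 (l : R) : l <> 0 -> exp l - 1 <> 0.
Proof. intros Hl He; pose proof (exp_sub1_sign l Hl) as Hs; rewrite He in Hs; lra. Qed.

Lemma bern_pos (l : R) : l <> 0 -> 0 < bern l.
Proof.
  intro Hl; unfold bern.
  replace (l / (exp l - 1)) with (l * (exp l - 1) / (exp l - 1) ^ 2)
    by (field; apply exp_sub1_neq0; exact Hl).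
  apply Rdiv_lt_0_compat; [apply exp_sub1_sign; exact Hl |].
  pose proof (exp_sub1_neq0 l Hl); nra.
Qed.

Lemma bern_opp (l : R) : l <> 0 -> bern (- l) = bern l + l.
Proof.
  intro Hl; unfold bern.
  pose proof (exp_sub1_neq0 l Hl) as He.
  assert (Hinv : exp (- l) * exp l = 1)
    by (rewrite <- exp_plus, Rplus_opp_l; apply exp_0).
  assert (Hpos : 0 < exp l) by apply exp_pos.
  assert (exp (- l) - 1 <> 0) by (apply exp_sub1_neq0; lra).
  apply Rmult_eq_reg_r with ((exp l - 1) * (exp (- l) - 1)); [| nra].
  field_simplify; [nra | assumption | assumption].
Qed.

Lemma bern_le1 (l : R) : 0 < l -> bern l <= 1.
Proof.
  intro Hl; unfold bern.
  pose proof (exp_ineq1 l ltac:(lra)).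
  apply Rmult_le_reg_r with (exp l - 1); [lra |].
  field_simplify; lra.
Qed.

Lemma bern_le_1_abs (l : R) : l <> 0 -> bern l <= 1 + Rabs l.
Proof.
  intro Hl; destruct (Rlt_or_le 0 l) as [Hpos | Hneg].
  - pose proof (bern_le1 l Hpos); pose proof (Rabs_pos l); lra.
  - replace (bern l) with (bern (- l) - l) by (rewrite (bern_opp l Hl); ring).
    pose proof (bern_le1 (- l) ltac:(lra)).
    rewrite Rabs_left1 by lra; lra.
Qed.

Lemma cc_delta_bern (l : R) : l <> 0 -> 1 - l * cc_delta l = bern l.
Proof.
  intro Hl; unfold cc_delta, bern.
  destruct (Req_EM_T l 0) as [| _]; [contradiction |].
  pose proof (exp_sub1_neq0 l Hl).
  field; repeat split; lra.
Qed.

Lemma cc_delta_bern_opp (l : R) : l <> 0 -> 1 + l * (1 - cc_delta l) = bern (- l).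
Proof.
  intro Hl; rewrite (bern_opp l Hl), <- (cc_delta_bern l Hl); ring.
Qed.

Lemma cc_weight_bounds (l : R) :
  (0 <= 1 + l * (1 - cc_delta l) <= 1 + Rabs l) /\
  (0 <= 1 - l * cc_delta l <= 1 + Rabs l).
Proof.
  destruct (Req_dec l 0) as [-> | Hl].
  - rewrite Rabs_R0; lra.
  - rewrite (cc_delta_bern_opp l Hl), (cc_delta_bern l Hl).
    pose proof (bern_pos l Hl); pose proof (bern_pos (- l) ltac:(lra)).
    pose proof (bern_le_1_abs l Hl).
    pose proof (bern_le_1_abs (- l) ltac:(lra)); rewrite Rabs_Ropp in *.
    lra.
Qed.

Lemma fold_Rmax_ge (l : list R) (x : R) : In x l -> x <= fold_right Rmax 0 l.
Proof.
  induction l as [| y l IH]; simpl; [tauto |].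
  intros [-> | Hx]; [apply Rmax_l |].
  eapply Rle_trans; [exact (IH Hx) | apply Rmax_r].
Qed.

Lemma max_upto_ge (N : nat) (g : nat -> R) (i : nat) :
  (i < N)%nat -> g i <= max_upto N g.
Proof.
  intro Hi; apply fold_Rmax_ge, in_map, in_seq; lia.
Qed.

Lemma max_upto_nonneg (N : nat) (g : nat -> R) : 0 <= max_upto N g.
Proof.
  unfold max_upto; induction (map g (seq 0 N)) as [| y l IH]; simpl; [lra |].
  eapply Rle_trans; [exact IH | apply Rmax_r].
Qed.

(* [G] is the net inflow into a cell with value [x], coming from a neighbour
   with value [y >= 0]; both exchange coefficients are bounded by [K]. *)
Definition inflow_form (K x G : R) : Prop :=
  exists a b y, 0 <= a <= K /\ 0 <= b <= K /\ 0 <= y /\ G = a * y - b * x.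

Lemma inflow_form_zero (K x : R) : 0 <= K -> inflow_form K x 0.
Proof. intro HK; exists 0, 0, 0; repeat split; lra. Qed.

Section Fluxes.

Variables (N : nat) (dw M Dm : R) (C Dh f : nat -> R).
Hypothesis dw_pos : 0 < dw.
Hypothesis M_nonneg : 0 <= M.
Hypothesis Dm_nonneg : 0 <= Dm.
Hypothesis Dh_pos : forall i, (i < N)%nat -> 0 < Dh i.
Hypothesis C_le : forall i, (i < N)%nat -> Rabs (C i) <= M.
Hypothesis Dh_le : forall i, (i < N)%nat -> Dh i <= Dm.
Hypothesis f_nonneg : forall i, (i <= N)%nat -> 0 <= f i.

Lemma flux_bound_nonneg : 0 <= M + Dm / dw.
Proof.
  assert (0 <= Dm / dw) by (apply Rmult_le_pos; [| apply Rlt_le, Rinv_0_lt_compat]; auto).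
  lra.
Qed.

Lemma cc_flux_split (i : nat) : (i < N)%nat ->
  exists a b, 0 <= a <= M + Dm / dw /\ 0 <= b <= M + Dm / dw /\
    cc_flux dw C Dh f i = a * f (S i) - b * f i.
Proof.
  intro Hi.
  set (q := Dh i / dw).
  set (l := cc_lambda dw C Dh i).
  pose proof (Dh_pos i Hi).
  assert (Hq : 0 < q) by (apply Rdiv_lt_0_compat; auto).
  assert (HC : C i = q * l) by (unfold q, l, cc_lambda; field; lra).
  assert (Hq_le : q <= Dm / dw)
    by (apply Rmult_le_compat_r; [apply Rlt_le, Rinv_0_lt_compat |]; auto).
  assert (HCabs : q * Rabs l <= M)
    by (rewrite <- (Rabs_pos_eq q), <- Rabs_mult, <- HC by lra; auto).
  destruct (cc_weight_bounds l) as [Ha Hb].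
  exists (q * (1 + l * (1 - cc_delta l))), (q * (1 - l * cc_delta l)).
  repeat split; try nra.
  unfold cc_flux; fold l; rewrite HC; unfold q; field; lra.
Qed.

Lemma cc_flux_right_inflow (i : nat) : (i <= N)%nat ->
  inflow_form (M + Dm / dw) (f i) (cc_flux_right N dw C Dh f i).
Proof.
  intro Hi; unfold cc_flux_right.
  destruct (Nat.ltb_spec i N) as [Hlt | Hge].
  - destruct (cc_flux_split i Hlt) as (a & b & Ha & Hb & ->).
    exists a, b, (f (S i)); repeat split; try lra; apply f_nonneg; lia.
  - exact (inflow_form_zero _ _ flux_bound_nonneg).
Qed.

Lemma cc_flux_left_inflow (i : nat) : (i <= N)%nat ->
  inflow_form (M + Dm / dw) (f i) (- cc_flux_left N dw C Dh f i).
Proof.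
  intro Hi; destruct i as [| j]; simpl.
  - rewrite Ropp_0; exact (inflow_form_zero _ _ flux_bound_nonneg).
  - destruct (cc_flux_split j ltac:(lia)) as (a & b & Ha & Hb & Hflux).
    unfold cc_flux_right; rewrite (proj2 (Nat.ltb_lt j N)) by lia; rewrite Hflux.
    exists b, a, (f j); repeat split; try lra; apply f_nonneg; lia.
Qed.

End Fluxes.

Lemma euler_inflow_nonneg (K r x G1 G2 : R) :
  0 <= x -> 0 <= r -> 2 * r * K <= 1 ->
  inflow_form K x G1 -> inflow_form K x G2 -> 0 <= x + r * (G1 + G2).
Proof.
  intros Hx Hr HK (a1 & b1 & y1 & Ha1 & Hb1 & Hy1 & ->) (a2 & b2 & y2 & Ha2 & Hb2 & Hy2 & ->).
  replace (x + r * (a1 * y1 - b1 * x + (a2 * y2 - b2 * x)))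
    with (x * (1 - r * (b1 + b2)) + r * a1 * y1 + r * a2 * y2) by ring.
  assert (0 <= 1 - r * (b1 + b2)) by nra.
  assert (0 <= x * (1 - r * (b1 + b2))) by nra.
  assert (0 <= r * a1 * y1) by (repeat apply Rmult_le_pos; lra).
  assert (0 <= r * a2 * y2) by (repeat apply Rmult_le_pos; lra).
  lra.
Qed.

Lemma cfl_rescale (dw dt M D : R) : 0 < dw -> 0 < M * dw + D ->
  dt <= dw ^ 2 / (2 * (M * dw + D)) -> 2 * (dt / dw) * (M + D / dw) <= 1.
Proof.
  intros Hdw Hden Hdt.
  replace (2 * (dt / dw) * (M + D / dw)) with (dt * (2 * (M * dw + D)) / dw ^ 2)
    by (field; lra).
  apply Rmult_le_compat_r with (r := 2 * (M * dw + D)) in Hdt; [| lra].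
  replace (dw ^ 2 / (2 * (M * dw + D)) * (2 * (M * dw + D))) with (dw ^ 2) in Hdt
    by (field; lra).
  apply Rmult_le_reg_r with (dw ^ 2); [nra |].
  replace (dt * (2 * (M * dw + D)) / dw ^ 2 * dw ^ 2) with (dt * (2 * (M * dw + D)))
    by (field; lra).
  lra.
Qed.

Theorem mainTheorem3 (N : nat) (dw dt : R) (C Dh f : nat -> R) :
  (1 <= N)%nat ->
  0 < dw -> 0 < dt ->
  (forall i, (i < N)%nat -> 0 < Dh i) ->
  dt <= dw ^ 2 / (2 * (max_upto N (fun i => Rabs (C i)) * dw + max_upto N Dh)) ->
  (forall i, (i <= N)%nat -> 0 <= f i) ->
  forall i, (i <= N)%nat -> 0 <= cc_step N dw dt C Dh f i.
Proof.
  intros HN Hdw Hdt HDh Hcfl Hf i Hi.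
  set (M := max_upto N (fun i => Rabs (C i))) in *.
  set (Dm := max_upto N Dh) in *.
  assert (HM : 0 <= M) by apply max_upto_nonneg.
  assert (HDm : 0 < Dm)
    by (apply Rlt_le_trans with (Dh 0%nat); [apply HDh | apply max_upto_ge]; lia).
  assert (HCM : forall j, (j < N)%nat -> Rabs (C j) <= M)
    by (intros; apply (max_upto_ge N (fun j => Rabs (C j))); auto).
  assert (HDhM : forall j, (j < N)%nat -> Dh j <= Dm) by (intros; apply max_upto_ge; auto).
  replace (cc_step N dw dt C Dh f i) with (f i + dt / dw *
    (cc_flux_right N dw C Dh f i + - cc_flux_left N dw C Dh f i))
    by (unfold cc_step; field; lra).
  apply euler_inflow_nonneg with (M + Dm / dw).
  - auto.
  - apply Rmult_le_pos; [lra | apply Rlt_le, Rinv_0_lt_compat; lra].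
  - apply cfl_rescale; auto; nra.
  - apply (cc_flux_right_inflow N dw M Dm C Dh f); auto; lra.
  - apply (cc_flux_left_inflow N dw M Dm C Dh f); auto; lra.
Qed.
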